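(* Let $A$ be a totally ordered alphabet, $u\in A^*$, and $b,\ell\in A$ with $b>\ell$. Suppose that $\rho_\ell(u)$ is positive (i.e. lies in $A^*$), and that $u$ has a factor $\pi b$, where $\pi$ is a nonempty palindrome. Then $\rho_\ell(\pi)\ell^{-1}$ is a positive palindrome.
   Context: $F(A)$ is the free group on $A$, and elements of $F(A)$ lying in $A^*$ are called positive. The reversal $g\mapsto\tilde g$ is the unique anti-automorphism of $F(A)$ fixing each letter; a palindrome is an element fixed by it. For $\ell\in A$, $\rho_\ell$ is the automorphism of $F(A)$ defined on letters $a\in A$ by $\rho_\ell(a)=a\ell$ if $a<\ell$, $\rho_\ell(\ell)=\ell$, and $\rho_\ell(a)=\ell^{-1}a$ if $a>\ell$. *)

From mathcomp Require Import all_boot all_order.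
Set Implicit Arguments. Unset Strict Implicit. Unset Printing Implicit Defensive.
Import Order.TTheory.
Local Open Scope order_scope.

(* Free group F(A) over an alphabet A: an element is represented by its
   unique freely reduced word over A^{+-1}; a letter (a, true) is a, and
   (a, false) is a^{-1}. *)
Section FreeGroup.
Variables (d : Order.disp_t) (A : orderType d).

Definition gletter := (A * bool)%type.

Definition push (x : gletter) (acc : seq gletter) : seq gletter :=
  match acc with
  | y :: t => if (x.1 == y.1) && (x.2 != y.2) then t else x :: acc
  | [::] => [:: x]
  end.

Definition freduce (s : seq gletter) : seq gletter := foldr push [::] s.

Definition fmul (u v : seq gletter) : seq gletter := freduce (u ++ v).

Definition finv (u : seq gletter) : seq gletter :=
  rev (map (fun x => (x.1, ~~ x.2)) u).

Definition pos_word (u : seq A) : seq gletter := map (fun a => (a, true)) u.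

Definition positive (g : seq gletter) : bool := all snd (freduce g).

Definition frev (g : seq gletter) : seq gletter := freduce (rev g).

Definition palindrome (g : seq gletter) : Prop := frev g = freduce g.

Definition rho_letter (l a : A) : seq gletter :=
  if a < l then [:: (a, true); (l, true)]
  else if a == l then [:: (l, true)]
  else [:: (l, false); (a, true)].

Definition rho_gletter (l : A) (x : gletter) : seq gletter :=
  if x.2 then rho_letter l x.1 else finv (rho_letter l x.1).

Definition rho (l : A) (g : seq gletter) : seq gletter :=
  freduce (flatten (map (rho_gletter l) g)).

End FreeGroup.

From mathcomp Require Import all_boot all_order.
Import Order.TTheory.
Local Open Scope order_scope.

Set Implicit Arguments. Unset Strict Implicit. Unset Printing Implicit Defensive.

(* The reduced word of rho_l(a_1 ... a_n) can be written down explicitly: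
   every letter a_i other than l survives; between a_i and a_(i+1) there
   remains l when both are <= l, l^-1 when both are > l, and nothing
   otherwise; in front there is l^-1 iff a_1 > l, and at the end l iff
   a_n <= l.  Hence rho_l(u) is positive only if u has no two adjacent
   letters > l.  As b > l follows pi in u, the last letter of pi is <= l,
   and so is its first one since pi is a palindrome; thus rho_l(pi) l^-1 is
   the positive middle part above, which is a palindrome because the rule
   for what remains between two letters is symmetric in them. *)

Section FreeReduction.
Variables (d : Order.disp_t) (A : orderType d).
Implicit Types (s : seq (gletter A)) (x y : gletter A).

Definition cancels x y := (x.1 == y.1) && (x.2 != y.2).

Definition reduced s := sorted (fun x y => ~~ cancels x y) s.

Lemma push_reduced x s : reduced s -> reduced (push x s).
Proof.
case: s => [|y t] //=; case: ifP => [_ /path_sorted //|xy].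
by rewrite /= /cancels xy => ->.
Qed.

Lemma freduce_reduced s : reduced (freduce s).
Proof. by elim: s => //= x s; apply: push_reduced. Qed.

Lemma freduce_id s : reduced s -> freduce s = s.
Proof.
elim: s => //= x s IH red_xs; rewrite IH; last exact: path_sorted red_xs.
by case: s red_xs {IH} => //= y t /andP[]; rewrite /cancels => /negbTE ->.
Qed.

Lemma freduce_idem s : freduce (freduce s) = freduce s.
Proof. exact/freduce_id/freduce_reduced. Qed.

Lemma positive_reduced s : all snd s -> reduced s.
Proof.
elim: s => // x [|y t] IH //= /andP[x2 /andP[y2 t2]].
by rewrite /cancels x2 y2 andbF; apply: IH; rewrite /= y2.
Qed.

Lemma freduce_positive s : all snd s -> freduce s = s.
Proof. by move/positive_reduced/freduce_id. Qed.

Lemma freduce_pos_word (u : seq A) : freduce (pos_word u) = pos_word u.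
Proof. by apply: freduce_positive; rewrite all_map; apply/allP. Qed.

Lemma freduce_cat_inverse s (a : A) (e : bool) :
  freduce (s ++ [:: (a, e); (a, ~~ e)]) = freduce s.
Proof. by rewrite /freduce foldr_cat /= eqxx; case: e. Qed.

Lemma palindrome_pos_word (u : seq A) : palindrome (pos_word u) -> rev u = u.
Proof.
rewrite /palindrome /frev -map_rev !freduce_pos_word.
by apply: inj_map => a1 a2 [].
Qed.

End FreeReduction.

Lemma last_rev_belast (T : Type) (x : T) s : last (last x s) (rev (belast x s)) = x.
Proof. by rewrite -[RHS](last_rcons x (rev s)) -rev_cons lastI rev_rcons. Qed.

Section RhoNormalForm.
Variables (d : Order.disp_t) (A : orderType d) (l : A).
Implicit Types (a c : A) (w : seq A).

Definition not_both_above a c := ~~ ((l < a) && (l < c)).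

Definition erase_l a : seq (gletter A) := if a == l then [::] else [:: (a, true)].

Definition l_between a c : seq (gletter A) :=
  if l < a then (if l < c then [:: (l, false)] else [::])
  else (if l < c then [::] else [:: (l, true)]).

Fixpoint rho_core a w : seq (gletter A) :=
  if w is c :: w' then erase_l a ++ l_between a c ++ rho_core c w' else erase_l a.

Definition rho_tail a w := rho_core a w ++ (if l < last a w then [::] else [:: (l, true)]).

Definition rho_nf a w := (if l < a then [:: (l, false)] else [::]) ++ rho_tail a w.

Lemma rho_cons a w :
  rho l (pos_word (a :: w)) = foldr (@push _ A) (rho l (pos_word w)) (rho_letter l a).
Proof. by rewrite /rho /freduce /= foldr_cat. Qed.

Lemma rho_tail_above c w : l < c -> exists t, rho_tail c w = (c, true) :: t.
Proof.
move=> /gt_eqF lc; rewrite /rho_tail.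
by case: w => [|? ?] /=; rewrite /erase_l lc; eexists.
Qed.

Lemma rho_tail_below c w : ~~ (l < c) ->
  exists y t, rho_tail c w = (y, true) :: t.
Proof.
move=> /negbTE lc; rewrite /rho_tail.
case: w => [|c' w] /=; rewrite /erase_l /l_between lc.
all: case: eqP => _ /=; try by do 2 eexists.
case: ifP => lc' /=; try by do 2 eexists.
by have [t tail_ct] := rho_tail_above w lc'; exists c', t.
Qed.

Lemma rho_pos_word_cons a w : rho l (pos_word (a :: w)) = rho_nf a w.
Proof.
elim: w a => [|c w IH] a; rewrite rho_cons.
  rewrite /rho_nf /rho_tail /= /erase_l /rho_letter.
  by case: ltgtP => al /=; rewrite ?andbF ?(lt_eqF al) ?andbT.
rewrite IH /rho_nf /rho_tail /= -!catA -/(rho_tail c w) /l_between /rho_letter /erase_l.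
case: (boolP (l < c)) => lc.
  have [t ->] := rho_tail_above w lc.
  by case: ltgtP => al /=; rewrite ?eqxx //= ?andbF // (gt_eqF al) /= eq_sym (gt_eqF al).
have [y [t ->]] := rho_tail_below w lc.
by case: ltgtP => al; rewrite /= /push ?andbF // eq_sym (gt_eqF al).
Qed.

Lemma all_snd_rho_core a w : all snd (rho_core a w) = path not_both_above a w.
Proof.
have erase_l_pos c : all snd (erase_l c) by rewrite /erase_l; case: eqP.
elim: w a => [|c w IH] a /=; first exact: erase_l_pos.
rewrite !all_cat erase_l_pos IH /not_both_above /l_between.
by case: (l < a); case: (l < c).
Qed.

Lemma positive_rho g : positive (rho l g) = all snd (rho l g).
Proof. by rewrite /positive /rho freduce_idem. Qed.

Lemma positive_rho_sorted u :
  positive (rho l (pos_word u)) -> sorted not_both_above u.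
Proof.
case: u => // a w; rewrite positive_rho rho_pos_word_cons /rho_nf /rho_tail.
by rewrite !all_cat all_snd_rho_core => /and3P[].
Qed.

Lemma rev_l_between a c : rev (l_between a c) = l_between c a.
Proof. by rewrite /l_between; case: (l < a); case: (l < c). Qed.

Lemma rho_core_rcons a w c :
  rho_core a (rcons w c) = rho_core a w ++ l_between (last a w) c ++ erase_l c.
Proof. by elim: w a => [|b w IH] a //=; rewrite IH !catA. Qed.

Lemma rev_rho_core a w : rev (rho_core a w) = rho_core (last a w) (rev (belast a w)).
Proof.
have rev_erase_l c : rev (erase_l c) = erase_l c by rewrite /erase_l; case: eqP.
elim: w a => [|c w IH] a /=; first exact: rev_erase_l.
by rewrite !rev_cat IH rev_cons rho_core_rcons rev_erase_l rev_l_between last_rev_belast catA.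
Qed.

Lemma rho_pos_word_mul_inv a w :
  path not_both_above a w -> ~~ (l < a) -> ~~ (l < last a w) ->
  fmul (rho l (pos_word (a :: w))) [:: (l, false)] = rho_core a w.
Proof.
rewrite /fmul rho_pos_word_cons /rho_nf /rho_tail => core_pos /negbTE-> /negbTE->.
by rewrite cat0s -catA cat1s (freduce_cat_inverse _ l true) freduce_positive ?all_snd_rho_core.
Qed.

End RhoNormalForm.

Theorem lemma4p2 (d : Order.disp_t) (A : orderType d) (u : seq A) (b l : A) :
  l < b ->
  positive (rho l (pos_word u)) ->
  forall (p pi s : seq A),
    u = p ++ pi ++ b :: s ->
    pi != [::] ->
    palindrome (pos_word pi) ->
    let w := fmul (rho l (pos_word pi)) [:: (l, false)] in
    positive w /\ palindrome w.
Proof.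
move=> lb + p pi s u_def; rewrite {}u_def => /positive_rho_sorted /cat_sorted2[_ sorted_pi_b].
case: pi sorted_pi_b => [//|a w] sorted_awb _ /palindrome_pos_word rev_pi.
move: sorted_awb; rewrite [sorted _ _]/= cat_path => /andP[path_aw /andP[last_b _]].
have last_below : ~~ (l < last a w).
  by move: last_b; rewrite /not_both_above lb andbT.
have [last_a rev_belast] : last a w = a /\ rev (belast a w) = w.
  by move: rev_pi; rewrite {1}lastI rev_rcons => -[].
rewrite rho_pos_word_mul_inv //; last by rewrite -last_a.
split.
  by rewrite /positive freduce_positive ?all_snd_rho_core.
by rewrite /palindrome /frev rev_rho_core last_a rev_belast.
Qed.
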